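(* Let $A_1,A_2$ be two stochastic undirected $n\times n$ matrices. Then the switched system $x(t+1)=A_{\sigma(t)}x(t)$, $x(0)=x_0$, converges to a multiple of $\mathbf{1}$ for every $x_0\in\mathbb{R}^n$ and every sequence $\sigma:\mathbb{N}\to\{1,2\}$ if and only if it converges to a multiple of $\mathbf{1}$ for every $x_0\in\mathbb{R}^n$ under each of the three sequences $\sigma_1=1,1,1,\dots$, $\sigma_2=2,2,2,\dots$ and $\sigma_3=1,2,1,2,\dots$.
   Context: $\mathbf{1}=(1,\dots,1)^\top$. A stochastic matrix is a nonnegative matrix whose rows sum to $1$. A nonnegative matrix $A=(a_{ij})$ is undirected if $a_{ij}>0 \Leftrightarrow a_{ji}>0$ for all $i,j$. *)

From HB Require Import structures.
From mathcomp Require Import all_boot all_order all_algebra.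
From mathcomp Require Import all_classical all_reals topology normedtype sequences.
Set Implicit Arguments. Unset Strict Implicit. Unset Printing Implicit Defensive.
Import Order.TTheory GRing.Theory Num.Theory.
Local Open Scope classical_set_scope.
Local Open Scope ring_scope.

Definition stochastic (R : realType) (n : nat) (A : 'M[R]_n) : Prop :=
  (forall i j, 0 <= A i j) /\ (forall i, \sum_(j < n) A i j = 1).

Definition undirected (R : realType) (n : nat) (A : 'M[R]_n) : Prop :=
  forall i j, 0 < A i j <-> 0 < A j i.

(* switching signal sigma : nat -> bool ; false stands for index 1, true for 2 *)
Definition select (R : realType) (n : nat) (A1 A2 : 'M[R]_n) (b : bool) : 'M[R]_n :=
  if b then A2 else A1.

Fixpoint traj (R : realType) (n : nat) (A1 A2 : 'M[R]_n) (sigma : nat -> bool)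
  (x0 : 'cV[R]_n) (t : nat) : 'cV[R]_n :=
  match t with
  | 0 => x0
  | t'.+1 => select A1 A2 (sigma t') *m traj A1 A2 sigma x0 t'
  end.

Definition conv_to_consensus (R : realType) (n : nat) (x : nat -> 'cV[R]_n) : Prop :=
  exists c : R, forall i : 'I_n, (fun t => x t i ord0) @ \oo --> (c : R^o).

Definition conv_all_x0 (R : realType) (n : nat) (A1 A2 : 'M[R]_n)
  (sigma : nat -> bool) : Prop :=
  forall x0 : 'cV[R]_n, conv_to_consensus (traj A1 A2 sigma x0).

Definition sigma1 : nat -> bool := fun _ => false.
Definition sigma2 : nat -> bool := fun _ => true.
Definition sigma3 : nat -> bool := fun t => odd t.

(* Necessity is trivial. Conversely, convergence to consensus under the three
   periodic signals forces A1, A2 and A2 A1 to have a power with a positive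
   column: the rows of the limit are probability vectors, so some column of the
   product eventually becomes positive.  As the A_i are stochastic and
   undirected, the support of A_d A_d contains the diagonal, so deleting a
   square dd from a word can only shrink the support of its product; reducing
   words in this way to alternating ones shows that every nonempty product of
   A1 and A2 has a power with a positive column.  A pigeonhole argument on the
   supports of prefix products then gives every window of length
   K = #|'M[bool]_n| of an arbitrary signal a column whose entries are at least
   delta^K, delta the least positive entry of A1 and A2.  Each such window
   contracts max x - min x by the factor 1 - delta^K, hence consensus. *)

From HB Require Import structures.
From mathcomp Require Import all_boot all_order all_algebra.
From mathcomp Require Import all_classical all_reals topology normedtype sequences.
From mathcomp Require Import zify ring lra.
Set Implicit Arguments. Unset Strict Implicit. Unset Printing Implicit Defensive.
Import Order.TTheory GRing.Theory Num.Theory.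
Import numFieldNormedType.Exports.
Local Open Scope classical_set_scope.
Local Open Scope ring_scope.

Lemma mulr_exprM_shift (R : pzSemiRingType) (x y : R) k :
  x * (y * x) ^+ k = (x * y) ^+ k * x.
Proof.
elim: k => [|k IH]; first by rewrite !expr0 mulr1 mul1r.
by rewrite exprSr mulrA IH exprSr -!mulrA.
Qed.

Lemma ler_sum_term (R : numDomainType) (I : finType) (F : I -> R) j :
  (forall i, 0 <= F i) -> F j <= \sum_i F i.
Proof. by move=> F0; rewrite (bigD1 j) //= lerDl sumr_ge0. Qed.

Section Support.
Variables (R : numDomainType) (n : nat).
Implicit Types X Y Z : 'M[R]_n.

Definition mx_nonneg X := forall i j, 0 <= X i j.
Definition supp_sub X Y := forall i j, 0 < X i j -> 0 < Y i j.
Definition pos_in_rows X := forall i, exists j, 0 < X i j.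
Definition pos_col X := exists j, forall i, 0 < X i j.
Definition pos_col_pow X := exists m, pos_col (X ^+ m).

Lemma mx_nonneg1 : mx_nonneg 1.
Proof. by move=> i j; rewrite mxE ler0n. Qed.

Lemma mx_nonnegM X Y : mx_nonneg X -> mx_nonneg Y -> mx_nonneg (X * Y).
Proof. by move=> X0 Y0 i j; rewrite mxE sumr_ge0 // => k _; rewrite mulr_ge0. Qed.

Lemma mx_nonnegX X k : mx_nonneg X -> mx_nonneg (X ^+ k).
Proof.
move=> X0; elim: k => [|k IH]; first exact: mx_nonneg1.
by rewrite exprS; apply: mx_nonnegM.
Qed.

Section Products.
Variables X Y : 'M[R]_n.
Hypotheses (X0 : mx_nonneg X) (Y0 : mx_nonneg Y).

Lemma le_mulmx_term i k j : X i k * Y k j <= (X * Y) i j.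
Proof. by rewrite mxE; apply: ler_sum_term => l; rewrite mulr_ge0. Qed.

Lemma mulmx_gt0 i k j : 0 < X i k -> 0 < Y k j -> 0 < (X * Y) i j.
Proof. by move=> Xik Ykj; apply: lt_le_trans (le_mulmx_term i k j); rewrite mulr_gt0. Qed.

Lemma mulmx_gt0_ex i j : 0 < (X * Y) i j -> exists k, 0 < X i k /\ 0 < Y k j.
Proof.
apply: contraPP => /forallNP none; rewrite mxE big1 ?ltxx // => k _.
have /not_andP[] := none k => /negP; rewrite lt0r ?X0 ?Y0 andbT negbK => /eqP->.
  by rewrite mul0r.
by rewrite mulr0.
Qed.

Lemma pos_col_mulr : pos_col X -> pos_in_rows Y -> pos_col (X * Y).
Proof.
move=> [j Xj] /(_ j) [l Yjl]; exists l => i.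
exact: mulmx_gt0 (Xj i) Yjl.
Qed.

Lemma pos_col_mull : pos_in_rows X -> pos_col Y -> pos_col (X * Y).
Proof.
move=> Xr [j Yj]; exists j => i; have [k Xik] := Xr i.
exact: mulmx_gt0 Xik (Yj k).
Qed.

Lemma pos_in_rowsM : pos_in_rows X -> pos_in_rows Y -> pos_in_rows (X * Y).
Proof.
move=> Xr Yr i; have [k Xik] := Xr i; have [j Ykj] := Yr k.
by exists j; apply: mulmx_gt0 Xik Ykj.
Qed.

End Products.

Lemma supp_subMl X X' Y : mx_nonneg X -> mx_nonneg X' -> mx_nonneg Y ->
  supp_sub X X' -> supp_sub (X * Y) (X' * Y).
Proof.
move=> X0 X'0 Y0 XX' i j /(mulmx_gt0_ex X0 Y0) [k [Xik Ykj]].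
by apply: (mulmx_gt0 X'0 Y0 (XX' _ _ Xik) Ykj).
Qed.

Lemma supp_subMr X Y Y' : mx_nonneg X -> mx_nonneg Y -> mx_nonneg Y' ->
  supp_sub Y Y' -> supp_sub (X * Y) (X * Y').
Proof.
move=> X0 Y0 Y'0 YY' i j /(mulmx_gt0_ex X0 Y0) [k [Xik Ykj]].
by apply: (mulmx_gt0 X0 Y'0 Xik (YY' _ _ Ykj)).
Qed.

Lemma supp_subM X X' Y Y' :
  mx_nonneg X -> mx_nonneg Y -> mx_nonneg X' -> mx_nonneg Y' ->
  supp_sub X X' -> supp_sub Y Y' -> supp_sub (X * Y) (X' * Y').
Proof.
move=> X0 Y0 X'0 Y'0 XX' YY' i j.
by move/(supp_subMl X0 X'0 Y0 XX')/(supp_subMr X'0 Y0 Y'0 YY').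
Qed.

Lemma supp_sub_mulr X Z : mx_nonneg X -> mx_nonneg Z -> supp_sub 1 Z ->
  supp_sub X (X * Z).
Proof.
move=> X0 Z0 Z1 i j Xij; have Zjj : 0 < Z j j by apply: Z1; rewrite mxE eqxx ltr01.
by apply: (mulmx_gt0 X0 Z0 Xij Zjj).
Qed.

Lemma pos_in_rowsX X k : mx_nonneg X -> pos_in_rows X -> pos_in_rows (X ^+ k).
Proof.
move=> X0 Xr; elim: k => [|k IH] i; first by exists i; rewrite mxE eqxx ltr01.
by rewrite exprS; apply: pos_in_rowsM => //; exact: mx_nonnegX.
Qed.

Lemma pos_col_sub X Y : supp_sub X Y -> pos_col X -> pos_col Y.
Proof. by move=> XY [j Xj]; exists j => i; apply: XY. Qed.

Lemma supp_subX X Y k : mx_nonneg X -> mx_nonneg Y -> supp_sub X Y ->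
  supp_sub (X ^+ k) (Y ^+ k).
Proof.
move=> X0 Y0 XY; elim: k => [|k IH]; first by [].
by rewrite !exprS; apply: supp_subM => //; exact: mx_nonnegX.
Qed.

Lemma pos_col_pow_sub X Y : mx_nonneg X -> mx_nonneg Y -> supp_sub X Y ->
  pos_col_pow X -> pos_col_pow Y.
Proof. by move=> X0 Y0 XY [m Xm]; exists m; apply: pos_col_sub (supp_subX X0 Y0 XY) Xm. Qed.

Lemma pos_col_powX X k : mx_nonneg X -> pos_in_rows X -> (0 < k)%N ->
  pos_col_pow X -> pos_col_pow (X ^+ k).
Proof.
move=> X0 Xr k0 [m Xm]; exists m; rewrite -exprM -(prednK k0) mulSn exprD.
by apply: pos_col_mulr (mx_nonnegX _ X0) (mx_nonnegX _ X0) Xm (pos_in_rowsX _ X0 Xr).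
Qed.

Lemma pos_col_powC X Y : mx_nonneg X -> mx_nonneg Y -> pos_in_rows X -> pos_in_rows Y ->
  pos_col_pow (Y * X) -> pos_col_pow (X * Y).
Proof.
move=> X0 Y0 Xr Yr [m YXm]; exists m.+1.
rewrite exprSr mulrA -mulr_exprM_shift.
have YX0 : mx_nonneg ((Y * X) ^+ m) by apply/mx_nonnegX/mx_nonnegM.
apply: pos_col_mulr => //; first exact: mx_nonnegM.
exact: pos_col_mull.
Qed.

Definition supp X : 'M[bool]_n := \matrix_(i, j) (0 < X i j).

Lemma supp_sub_supp X Y : supp X = supp Y -> supp_sub X Y.
Proof. by move=> XY i j; move/matrixP/(_ i j): XY; rewrite !mxE => ->. Qed.

Lemma supp_mul_eq X Y Y' : mx_nonneg X -> mx_nonneg Y -> mx_nonneg Y' ->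
  supp Y = supp Y' -> supp (X * Y) = supp (X * Y').
Proof.
move=> X0 Y0 Y'0 YY'; apply/matrixP => i j; rewrite ![supp _ _ _]mxE.
apply/idP/idP; first exact/(supp_subMr X0 Y0 Y'0 (supp_sub_supp YY')).
exact/(supp_subMr X0 Y'0 Y0 (supp_sub_supp (esym YY'))).
Qed.

Lemma supp_mulX_id Q W k : mx_nonneg Q -> mx_nonneg W ->
  supp (Q * W) = supp W -> supp (Q ^+ k * W) = supp W.
Proof.
move=> Q0 W0 QW; elim: k => [|k IH]; first by rewrite mul1r.
rewrite exprS -mulrA -QW; apply: supp_mul_eq => //.
exact/mx_nonnegM/W0/mx_nonnegX.
Qed.

End Support.

Lemma pigeonhole_nat (T : finType) (f : nat -> T) :
  exists a b, (a < b <= #|T|)%N /\ f a = f b.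
Proof.
pose g (i : 'I_#|T|.+1) := f i.
have /injectivePn [i [j ij gij]] : ~~ injectiveb g.
  by apply/injectiveP => /leq_card; rewrite card_ord ltnn.
case: (ltngtP i j) => [lt_ij|lt_ji|/val_inj eq_ij]; last by rewrite eq_ij eqxx in ij.
- by exists i, j; rewrite lt_ij -ltnS ltn_ord.
- by exists j, i; rewrite lt_ji -ltnS ltn_ord.
Qed.

Section Stochastic.
Variables (R : realType) (n : nat).
Implicit Types X Y : 'M[R]_n.

Lemma stochastic_nonneg X : stochastic X -> mx_nonneg X.
Proof. by case. Qed.

Lemma stochastic_pos_in_rows X : stochastic X -> pos_in_rows X.
Proof.
move=> [X0 X1] i; apply: contrapT => /forallNP none.
have := X1 i; rewrite big1 => [/eqP|j _]; first by rewrite eq_sym oner_eq0.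
by apply/eqP; rewrite eq_le X0 andbT leNgt; apply/negP/none.
Qed.

Lemma stochastic1 : stochastic (1 : 'M[R]_n).
Proof.
split; first exact: mx_nonneg1.
move=> i; rewrite (bigD1 i) //= big1 ?addr0 => [|j /negPf ji]; rewrite mxE ?eqxx //.
by rewrite eq_sym ji.
Qed.

Lemma stochasticM X Y : stochastic X -> stochastic Y -> stochastic (X * Y).
Proof.
move=> [X0 X1] [Y0 Y1]; split; first exact: mx_nonnegM.
move=> i; under eq_bigr do rewrite mxE.
rewrite exchange_big /=; under eq_bigr do rewrite -mulr_sumr Y1 mulr1.
exact: X1.
Qed.

Lemma stochasticX X k : stochastic X -> stochastic (X ^+ k).
Proof.
move=> sX; elim: k => [|k IH]; first exact: stochastic1.
by rewrite exprS; apply: stochasticM.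
Qed.

Lemma supp_sub1_sqr X : stochastic X -> undirected X -> supp_sub 1 (X * X).
Proof.
move=> sX uX i j; rewrite [in 0 < _ -> _]mxE; case: eqP => [<- _|]; last by rewrite ltxx.
have [k Xik] := stochastic_pos_in_rows sX i; have X0 := stochastic_nonneg sX.
by apply: (mulmx_gt0 X0 X0 Xik); apply/uX.
Qed.

End Stochastic.

Section Words.
Variables (R : realType) (n : nat) (A1 A2 : 'M[R]_n).
Hypotheses (sA1 : stochastic A1) (sA2 : stochastic A2).
Local Notation A := (select A1 A2).

Definition word_mx (w : seq bool) : 'M[R]_n := \prod_(b <- w) A b.

Lemma stochastic_select b : stochastic (A b). Proof. by case: b. Qed.

Lemma stochastic_word_mx w : stochastic (word_mx w).
Proof.
by apply: big_ind => //; [exact: stochastic1 | exact: stochasticM | move=> b _; exact: stochastic_select].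
Qed.

Lemma word_mx_cons b w : word_mx (b :: w) = A b * word_mx w.
Proof. exact: big_cons. Qed.

Lemma word_mx_cat u v : word_mx (u ++ v) = word_mx u * word_mx v.
Proof. exact: big_cat. Qed.

Fixpoint alt (c : bool) (L : nat) : seq bool :=
  if L is L'.+1 then c :: alt (~~ c) L' else [::].

Lemma size_alt c L : size (alt c L) = L.
Proof. by elim: L c => //= L IH c; rewrite IH. Qed.

Lemma word_repeat_or_alt c w :
  (exists u v d, c :: w = u ++ [:: d, d & v]) \/ c :: w = alt c (size w).+1.
Proof.
elim: w c => [|d w IH] c; first by right.
case: (IH d) => [[u [v [e ->]]]|alt_dw]; first by left; exists (c :: u), v, e.
case: (eqVneq d c) => [->|dNc]; first by left; exists [::], w, c.
by right; rewrite /= alt_dw; case: c d dNc {alt_dw} => -[].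
Qed.

Lemma word_mx_alt_double c k : word_mx (alt c k.*2) = (A c * A (~~ c)) ^+ k.
Proof.
elim: k => [|k IH]; first by rewrite expr0 /word_mx big_nil.
by rewrite doubleS /= !word_mx_cons negbK IH exprS mulrA.
Qed.

Lemma word_mx_alt_odd c k : word_mx (alt c k.*2.+1) = A c * (A (~~ c) * A c) ^+ k.
Proof. by rewrite /= word_mx_cons word_mx_alt_double negbK. Qed.

Lemma mx_nonneg_select b : mx_nonneg (A b).
Proof. exact/stochastic_nonneg/stochastic_select. Qed.

Lemma pos_in_rows_select b : pos_in_rows (A b).
Proof. exact/stochastic_pos_in_rows/stochastic_select. Qed.

Lemma mx_nonneg_word_mx w : mx_nonneg (word_mx w).
Proof. exact/stochastic_nonneg/stochastic_word_mx. Qed.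

Lemma pos_in_rows_word_mx w : pos_in_rows (word_mx w).
Proof. exact/stochastic_pos_in_rows/stochastic_word_mx. Qed.

Section PosColPow.
Hypotheses (uA1 : undirected A1) (uA2 : undirected A2).
Hypotheses (pA1 : pos_col_pow A1) (pA2 : pos_col_pow A2) (pA21 : pos_col_pow (A2 * A1)).

Lemma supp_sub1_select_sqr b : supp_sub 1 (A b * A b).
Proof. by case: b; apply: supp_sub1_sqr. Qed.

Lemma pos_col_pow_pair c : pos_col_pow (A c * A (~~ c)).
Proof.
case: c => //; apply: (pos_col_powC _ _ _ _ pA21).
- exact: (mx_nonneg_select false).
- exact: (mx_nonneg_select true).
- exact: (pos_in_rows_select false).
- exact: (pos_in_rows_select true).
Qed.

Lemma pos_col_pow_repeat u v d : pos_col_pow (word_mx (u ++ v)) ->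
  pos_col_pow (word_mx (u ++ [:: d, d & v])).
Proof.
rewrite !word_mx_cat !word_mx_cons !mulrA -[_ * A d * A d]mulrA.
have u0 := mx_nonneg_word_mx u; have v0 := mx_nonneg_word_mx v.
have dd0 := mx_nonnegM (mx_nonneg_select d) (mx_nonneg_select d).
apply: pos_col_pow_sub (mx_nonnegM u0 v0) (mx_nonnegM (mx_nonnegM u0 dd0) v0) _.
exact: supp_subMl u0 (mx_nonnegM u0 dd0) v0 (supp_sub_mulr u0 dd0 (supp_sub1_select_sqr d)).
Qed.

Lemma pos_col_pow_alt_odd c j : pos_col_pow (word_mx (alt (~~ c) j.*2.+1)) ->
  pos_col_pow (word_mx (alt c j.+1.*2.+1)).
Proof.
(* Rotating A_c (A_~c A_c)^(j+1) to (A_~c A_c)^(j+1) A_c exposes the square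
   A_c A_c, which can be dropped. *)
rewrite !word_mx_alt_odd negbK mulr_exprM_shift.
set P := A (~~ c) * A c.
have sP : stochastic P := stochasticM (stochastic_select _) (stochastic_select _).
have sPj : stochastic (P ^+ j * A (~~ c)) := stochasticM (stochasticX j sP) (stochastic_select _).
have scc := stochasticM (stochastic_select c) (stochastic_select c).
move=> pPj; apply: pos_col_powC.
- exact: mx_nonneg_select.
- exact/stochastic_nonneg/stochasticX.
- exact: pos_in_rows_select.
- exact/stochastic_pos_in_rows/stochasticX.
rewrite exprSr -mulrA /P -mulrA mulrA.
apply: pos_col_pow_sub pPj; [exact: stochastic_nonneg sPj | |].
  exact/stochastic_nonneg/stochasticM.
exact: supp_sub_mulr (stochastic_nonneg sPj) (stochastic_nonneg scc) (supp_sub1_select_sqr c).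
Qed.

Lemma pos_col_pow_select b : pos_col_pow (A b).
Proof. by case: b. Qed.

Lemma pos_col_pow_sqr d : pos_col_pow (word_mx [:: d; d]).
Proof.
rewrite !word_mx_cons /word_mx big_nil mulr1 -expr2.
exact: pos_col_powX (mx_nonneg_select d) (pos_in_rows_select d) _ (pos_col_pow_select d).
Qed.

Lemma pos_col_pow_word w : w != [::] -> pos_col_pow (word_mx w).
Proof.
have [N] := ubnP (size w); elim: N w => // N IH [|c w] // lt_cwN _.
have ltwN : (size w < N)%N := lt_cwN.
have [[u [v [d Ecw]]]|->] := word_repeat_or_alt c w.
  have lt_uvN : (size (u ++ v) < N)%N.
    have lt_uv_cw : (size (u ++ v) < size (c :: w))%N.
      by rewrite Ecw !size_cat ltn_add2l /= ltnS leqW.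
    exact: leq_trans lt_uv_cw ltwN.
  rewrite Ecw; have [|uv0] := eqVneq (u ++ v) [::].
    by case: u v {Ecw lt_uvN} => [|? ?] [|? ?] // _; apply: pos_col_pow_sqr.
  exact/pos_col_pow_repeat/IH.
have [k [ek|ok]] : exists k, (size w).+1 = k.*2 \/ (size w).+1 = k.*2.+1.
  exists (size w).+1./2; rewrite -[X in X = _ \/ X = _]odd_double_half.
  by case: odd; [right | left].
- rewrite ek word_mx_alt_double.
  have sP := stochasticM (stochastic_select c) (stochastic_select (~~ c)).
  apply: pos_col_powX (stochastic_nonneg sP) (stochastic_pos_in_rows sP) _ (pos_col_pow_pair c).
  by case: k ek.
- rewrite ok; case: k ok => [_|j ok].
    by rewrite word_mx_alt_odd expr0 mulr1; apply: pos_col_pow_select.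
  apply/pos_col_pow_alt_odd/IH => //; rewrite size_alt -!muln2 in ok *; lia.
Qed.

End PosColPow.
End Words.

Section Windows.
Variables (R : realType) (n : nat) (A1 A2 : 'M[R]_n) (sigma : nat -> bool).
Hypotheses (sA1 : stochastic A1) (sA2 : stochastic A2).
Local Notation word_mx := (word_mx A1 A2).

(* Latest letter first, matching the order of the matrix product. *)
Fixpoint window (s L : nat) : seq bool :=
  if L is L'.+1 then sigma (s + L') :: window s L' else [::].

Lemma window_add s a b : window s (a + b) = window (s + a) b ++ window s a.
Proof. by elim: b => [|b IH]; rewrite ?addn0 // addnS /= IH addnA. Qed.

Lemma size_window s L : size (window s L) = L.
Proof. by elim: L => //= L ->. Qed.

Lemma traj_window x0 s L :
  traj A1 A2 sigma x0 (s + L) = word_mx (window s L) *m traj A1 A2 sigma x0 s.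
Proof.
elim: L => [|L IH]; first by rewrite addn0 /word_mx big_nil mul1mx.
by rewrite addnS /= IH word_mx_cons mulmxA.
Qed.

Hypothesis pos_col_pow_words : forall w, w != [::] -> pos_col_pow (word_mx w).

Lemma pos_col_window s : pos_col (word_mx (window s #|{: 'M[bool]_n}|)).
Proof.
(* Two prefix products W and Q W share their support, hence so do W and Q^m W
   for every m, and a power of Q with a positive column passes it on to W. *)
have [a [b [/andP[lt_ab le_bK] supp_ab]]] :=
  pigeonhole_nat (fun L => supp (word_mx (window s L))).
set W := word_mx (window s a); set Q := word_mx (window (s + a) (b - a)).
have W0 : mx_nonneg W := mx_nonneg_word_mx sA1 sA2 _.
have Q0 : mx_nonneg Q := mx_nonneg_word_mx sA1 sA2 _.
have suppQW : supp (Q * W) = supp W.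
  by rewrite -word_mx_cat -window_add subnKC ?(ltnW lt_ab).
have [m pQm] : pos_col_pow Q.
  by apply: pos_col_pow_words; rewrite -size_eq0 size_window subn_eq0 -ltnNge.
have pW : pos_col W.
  apply: pos_col_sub (supp_sub_supp (supp_mulX_id m Q0 W0 suppQW)) _.
  exact: pos_col_mulr (mx_nonnegX m Q0) W0 pQm (pos_in_rows_word_mx sA1 sA2 _).
rewrite -(subnKC (leq_trans (ltnW lt_ab) le_bK)) window_add word_mx_cat.
exact: pos_col_mull (mx_nonneg_word_mx sA1 sA2 _) W0 (pos_in_rows_word_mx sA1 sA2 _) pW.
Qed.

End Windows.

Section FromConsensus.
Variables (R : realType) (n : nat).

Lemma conv_to_consensus_double (x : nat -> 'cV[R]_n) :
  conv_to_consensus x -> conv_to_consensus (fun t => x t.*2).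
Proof.
move=> [c xc]; exists c => i; apply: cvg_comp (xc i).
apply/cvgnyPge => N; apply: filterS (nbhs_infty_ge N) => t /leq_trans; apply.
by rewrite -addnn leq_addr.
Qed.

Lemma pos_col_of_consensus (P : nat -> 'M[R]_n) (i0 : 'I_n) :
  (forall t, stochastic (P t)) -> (forall x0, conv_to_consensus (fun t => P t *m x0)) ->
  exists t, pos_col (P t).
Proof.
move=> sP cP.
have /choice [c Pc] j : exists c : R, forall i, (fun t => P t i j) @ \oo --> c.
  have [c Pc] := cP (delta_mx j 0); exists c => i.
  have -> : (fun t => P t i j) = (fun t => (P t *m delta_mx j 0 : 'cV_n) i 0).
    by apply/funext => t; rewrite -colE mxE.
  exact: Pc.
have row_cvg : (fun t => \sum_j P t i0 j) @ \oo --> \sum_j c j.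
  by apply: cvg_big => [|j _]; [exact: add_continuous | exact: Pc].
have sum_c : \sum_j c j = 1.
  have row1 : (fun t => \sum_j P t i0 j) = cst 1 by apply/funext => t; exact: (sP t).2.
  by rewrite row1 in row_cvg; exact: cvg_unique _ row_cvg (cvg_cst _).
have [j cj] : exists j, 0 < c j.
  apply: contrapT => /forallNP c_le0; suff : \sum_j c j <= 0 by rewrite sum_c ler10.
  by apply: sumr_le0 => j _; rewrite leNgt; apply/negP/c_le0.
have : \forall t \near \oo, forall i, 0 < P t i j.
  by apply: filter_forall => i; exact: cvgr_gt (Pc j i) _ cj.
by case/filter_ex => t Ptj; exists t, j.
Qed.

Lemma pos_col_pow_of_consensus (X : 'M[R]_n) (i0 : 'I_n) : stochastic X ->
  (forall x0, conv_to_consensus (fun t => X ^+ t *m x0)) -> pos_col_pow X.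
Proof. by move=> sX; apply: pos_col_of_consensus i0 _ => t; apply: stochasticX. Qed.

Variables (A1 A2 : 'M[R]_n) (i0 : 'I_n).
Hypotheses (sA1 : stochastic A1) (sA2 : stochastic A2).

Lemma pos_col_pow_sigma1 : conv_all_x0 A1 A2 sigma1 -> pos_col_pow A1.
Proof.
move=> c1; apply: pos_col_pow_of_consensus i0 sA1 _ => x0.
suff <- : traj A1 A2 sigma1 x0 = (fun t => A1 ^+ t *m x0) by exact: c1.
by apply/funext; elim => [|t /= ->]; rewrite ?mul1mx // exprS mulmxA.
Qed.

Lemma pos_col_pow_sigma2 : conv_all_x0 A1 A2 sigma2 -> pos_col_pow A2.
Proof.
move=> c2; apply: pos_col_pow_of_consensus i0 sA2 _ => x0.
suff <- : traj A1 A2 sigma2 x0 = (fun t => A2 ^+ t *m x0) by exact: c2.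
by apply/funext; elim => [|t /= ->]; rewrite ?mul1mx // exprS mulmxA.
Qed.

Lemma pos_col_pow_sigma3 : conv_all_x0 A1 A2 sigma3 -> pos_col_pow (A2 * A1).
Proof.
move=> c3; apply: pos_col_pow_of_consensus i0 (stochasticM sA2 sA1) _ => x0.
suff <- : (fun t => traj A1 A2 sigma3 x0 t.*2) = (fun t => (A2 * A1) ^+ t *m x0).
  exact/conv_to_consensus_double/c3.
apply/funext; elim => [|t IH]; first by rewrite mul1mx.
by rewrite doubleS /= IH /sigma3 odd_double exprS !mulmxA.
Qed.

End FromConsensus.

Section EntryBound.
Variables (R : realType) (n : nat).
Implicit Types X : 'M[R]_n.

Definition min_pos_entry (X : 'M[R]_n) : R :=
  \big[Num.min/1]_i \big[Num.min/1]_j (if 0 < X i j then X i j else 1).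

Lemma min_pos_entry_gt0 X : 0 < min_pos_entry X.
Proof.
apply/bigmin_gtP; split => // i _; apply/bigmin_gtP; split => // j _.
by case: ifP.
Qed.

Lemma min_pos_entry_le X i j : 0 < X i j -> min_pos_entry X <= X i j.
Proof.
move=> Xij; apply: le_trans (bigmin_le _ i _) _; apply: le_trans (bigmin_le _ j _) _.
by rewrite Xij.
Qed.

Variables (A1 A2 : 'M[R]_n).
Hypotheses (sA1 : stochastic A1) (sA2 : stochastic A2).

Lemma word_mx_entry_ge w i j : 0 < word_mx A1 A2 w i j ->
  Num.min (min_pos_entry A1) (min_pos_entry A2) ^+ size w <= word_mx A1 A2 w i j.
Proof.
set d := Num.min _ _; have d0 : 0 <= d by rewrite le_min !ltW ?min_pos_entry_gt0.
elim: w i j => [|b w IH] i j; first by rewrite expr0 /word_mx big_nil mxE; case: eqP; rewrite ?ltxx.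
have b0 := mx_nonneg_select sA1 sA2 b; have w0 := stochastic_nonneg (stochastic_word_mx sA1 sA2 w).
rewrite word_mx_cons => /(mulmx_gt0_ex b0 w0) [k [bik wkj]].
apply: le_trans (le_mulmx_term b0 w0 i k j); rewrite exprS.
apply: ler_pM; rewrite ?exprn_ge0 ?IH //.
by case: b {b0} bik => /= bik; rewrite ge_min min_pos_entry_le ?orbT.
Qed.

End EntryBound.

Section Consensus.
Variables (R : realType) (m : nat).
Local Notation N := m.+1.
Implicit Types (y : 'cV[R]_N) (P : 'M[R]_N).

Definition vmax y := \big[Num.max/y ord0 ord0]_i y i ord0.
Definition vmin y := \big[Num.min/y ord0 ord0]_i y i ord0.

Lemma le_vmax y i : y i ord0 <= vmax y.
Proof. exact: (le_bigmax _ (fun k => y k ord0)). Qed.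

Lemma vmin_le y i : vmin y <= y i ord0.
Proof. exact: (bigmin_le _ _ (fun k => y k ord0)). Qed.

Lemma stochastic_mulmxBr P y a i : stochastic P ->
  (P *m y) i ord0 - a = \sum_l P i l * (y l ord0 - a).
Proof.
move=> [_ P1]; rewrite mxE; under [RHS]eq_bigr do rewrite mulrBr.
by rewrite sumrB -mulr_suml P1 mul1r.
Qed.

Section Bounds.
Variables (P : 'M[R]_N) (y : 'cV[R]_N) (j : 'I_N) (eps : R).
Hypotheses (sP : stochastic P) (Pj : forall i, eps <= P i j).

Lemma vmin_mulmx_ge : vmin y + eps * (y j ord0 - vmin y) <= vmin (P *m y).
Proof.
have P0 := stochastic_nonneg sP.
have gap i : eps * (y j ord0 - vmin y) <= (P *m y) i ord0 - vmin y.
  rewrite stochastic_mulmxBr //; apply: le_trans (ler_sum_term j _) => [|l].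
    by rewrite ler_wpM2r ?subr_ge0 ?vmin_le.
  by rewrite mulr_ge0 ?subr_ge0 ?vmin_le.
by apply/bigmin_geP; split => [|i _]; [have := gap ord0 | have := gap i]; lra.
Qed.

Lemma vmax_mulmx_le : vmax (P *m y) <= vmax y - eps * (vmax y - y j ord0).
Proof.
have P0 := stochastic_nonneg sP.
have gap i : eps * (vmax y - y j ord0) <= vmax y - (P *m y) i ord0.
  rewrite -[vmax y - (P *m y) i ord0]opprB stochastic_mulmxBr // -sumrN; apply: le_trans (ler_sum_term j _) => [|l];
    rewrite -mulrN opprB.
    by rewrite ler_wpM2r ?subr_ge0 ?le_vmax.
  by rewrite mulr_ge0 ?subr_ge0 ?le_vmax.
by apply/bigmax_leP; split => [|i _]; [have := gap ord0 | have := gap i]; lra.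
Qed.

Lemma spread_mulmx_le :
  vmax (P *m y) - vmin (P *m y) <= (1 - eps) * (vmax y - vmin y).
Proof.
apply: le_trans (lerB vmax_mulmx_le vmin_mulmx_ge) _.
by rewrite le_eqVlt; apply/orP; left; apply/eqP; ring.
Qed.

End Bounds.

Lemma vmin_mulmx P y : stochastic P -> vmin y <= vmin (P *m y).
Proof.
move=> sP; have := vmin_mulmx_ge y sP (fun i => stochastic_nonneg sP i ord0).
by rewrite mul0r addr0; apply.
Qed.

Lemma vmax_mulmx P y : stochastic P -> vmax (P *m y) <= vmax y.
Proof.
move=> sP; have := vmax_mulmx_le y sP (fun i => stochastic_nonneg sP i ord0).
by rewrite mul0r subr0; apply.
Qed.

Lemma vmin_le_vmax y : vmin y <= vmax y.
Proof. exact: le_trans (vmin_le y ord0) (le_vmax y ord0). Qed.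

Section UniformPosCol.
Variables (x : nat -> 'cV[R]_N) (S : nat -> 'M[R]_N) (K : nat) (eps : R).
Hypotheses (eps_gt0 : 0 < eps) (sS : forall t, stochastic (S t))
  (xS : forall t, x t.+1 = S t *m x t).
Hypothesis x_window : forall s, exists P,
  [/\ stochastic P, x (s + K)%N = P *m x s & exists j, forall i, eps <= P i j].

Let spread t := vmax (x t) - vmin (x t).

Lemma vmin_traj_nondecr : nondecreasing_seq (fun t => vmin (x t)).
Proof. by apply/nondecreasing_seqP => t; rewrite xS vmin_mulmx. Qed.

Lemma vmax_traj_nonincr : nonincreasing_seq (fun t => vmax (x t)).
Proof. by apply/nonincreasing_seqP => t; rewrite xS vmax_mulmx. Qed.

Lemma eps_le1 : eps <= 1.
Proof.
have [P [[P0 P1] _ [j Pj]]] := x_window 0.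
by apply: le_trans (Pj ord0) _; rewrite -(P1 ord0); apply: ler_sum_term (P0 ord0).
Qed.

Lemma spread_geometric k : spread (k * K) <= (1 - eps) ^+ k * spread 0.
Proof.
elim: k => [|k IH]; first by rewrite mul0n expr0 mul1r.
have [P [sP xkK [j Pj]]] := x_window (k * K).
rewrite /spread mulSnr xkK exprS -mulrA; apply: le_trans (spread_mulmx_le _ sP Pj) _.
by rewrite ler_wpM2l // subr_ge0 eps_le1.
Qed.

Lemma spread_cvg0 : spread @ \oo --> 0.
Proof.
have geo0 : (fun k => (1 - eps) ^+ k * spread 0) @ \oo --> 0.
  rewrite -(mul0r (spread 0)); apply: cvgM (cvg_cst _); apply: cvg_expr.
  by rewrite ger0_norm ?subr_ge0 ?eps_le1 // ltrBlDr ltrDl.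
apply/cvgrPdist_lt => e e0.
have /filter_ex [k geo_k] : \forall k \near \oo, (1 - eps) ^+ k * spread 0 < e.
  exact: cvgr_lt geo0 _ e0.
apply: filterS (nbhs_infty_ge (k * K)) => t le_kKt.
rewrite sub0r normrN ger0_norm ?subr_ge0 ?vmin_le_vmax //.
apply: le_lt_trans geo_k; apply: le_trans (spread_geometric k).
exact: lerB (vmax_traj_nonincr le_kKt) (vmin_traj_nondecr le_kKt).
Qed.

Theorem consensus_of_uniform_pos_col : conv_to_consensus x.
Proof.
have vmin_cvg : (fun t => vmin (x t)) @ \oo --> sup (range (fun t => vmin (x t))).
  apply: nondecreasing_cvgn vmin_traj_nondecr _.
  exists (vmax (x 0)) => _ [t _ <-].
  exact: le_trans (vmin_le_vmax _) (vmax_traj_nonincr (leq0n t)).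
exists (sup (range (fun t => vmin (x t)))) => i.
have -> : (fun t => x t i ord0) = (fun t => vmin (x t) + (x t i ord0 - vmin (x t))).
  by apply/funext => t; rewrite addrC subrK.
rewrite -[X in _ --> X]addr0; apply: cvgD vmin_cvg _.
apply: (squeeze_cvgr _ (cvg_cst 0) spread_cvg0); apply: nearW => t.
by rewrite subr_ge0 vmin_le lerB ?le_vmax.
Qed.

End UniformPosCol.

End Consensus.

Theorem proposition2 (R : realType) (n : nat) (A1 A2 : 'M[R]_n) :
  stochastic A1 -> stochastic A2 -> undirected A1 -> undirected A2 ->
  ((forall sigma : nat -> bool, conv_all_x0 A1 A2 sigma) <->
   (conv_all_x0 A1 A2 sigma1 /\ conv_all_x0 A1 A2 sigma2 /\ conv_all_x0 A1 A2 sigma3)).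
Proof.
move=> sA1 sA2 uA1 uA2; split=> [conv_all|[c1 [c2 c3]] sigma x0].
  by split; [|split]; apply: conv_all.
case: n A1 A2 sA1 sA2 uA1 uA2 c1 c2 c3 x0 => [|m] A1 A2 sA1 sA2 uA1 uA2 c1 c2 c3 x0.
  by exists 0 => -[].
have pA1 := pos_col_pow_sigma1 ord0 sA1 c1.
have pA2 := pos_col_pow_sigma2 ord0 sA2 c2.
have pA21 := pos_col_pow_sigma3 ord0 sA1 sA2 c3.
have pos_words := pos_col_pow_word sA1 sA2 uA1 uA2 pA1 pA2 pA21.
set K := #|{: 'M[bool]_m.+1}|.
set d := Num.min (min_pos_entry A1) (min_pos_entry A2).
apply: (consensus_of_uniform_pos_col (S := fun t => select A1 A2 (sigma t)) (K := K) (eps := d ^+ K)).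
- by rewrite exprn_gt0 // lt_min !min_pos_entry_gt0.
- by move=> t; apply: stochastic_select.
- by [].
move=> s; exists (word_mx A1 A2 (window sigma s K)); split.
- exact: stochastic_word_mx.
- exact: traj_window.
have [j Wj] := pos_col_window sigma sA1 sA2 pos_words s.
by exists j => i; rewrite -{1}(size_window sigma s K); apply: word_mx_entry_ge.
Qed.
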